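(* Let $F_0,F_1$ be an affine pair of communicating SR-machines. If the protocol is deadlock-free, then it has the bounded channel property if and only if neither $F_0$ nor $F_1$ has a send cycle.
   Context: A pair of communicating SR-machines is a CFSM protocol with communication graph having nodes $\{0,1\}$ and two edges $\alpha$ (from $0$ to $1$) and $\beta$ (from $1$ to $0$), disjoint finite message alphabets $M_\alpha,M_\beta$, and two finite state machines $F_j=(K_j,\Sigma_j,T_j,h_j)$, $j=0,1$, with $\Sigma_0=\{-b:b\in M_\alpha\}\cup\{+b:b\in M_\beta\}$, $\Sigma_1=\{-b:b\in M_\beta\}\cup\{+b:b\in M_\alpha\}$, $K_j$ finite, $h_j\in K_j$ initial, $T_j\subseteq K_j\times\Sigma_j\times K_j$ (transitions written $p\xrightarrow{e}q$; $+b$ = receive, $-b$ = send; $p\xrightarrow{w}q$ for $w\in\Sigma_j^*$ means a directed path labelled $w$). A state is a send state if it has no outgoing $+b$ transition and a receive state if it has no outgoing $-b$ transition. $F_j$ is an SR-machine if every state is a send or a receive state, its transition diagram is strongly connected, and $p\xrightarrow{e}q_1$, $p\xrightarrow{e}q_2$ imply $q_1=q_2$. Global states are $((p_0,p_1),(x_\alpha,x_\beta))$; initially $((h_0,h_1),(\lambda,\lambda))$. A step is either a send (a machine performs $p\xrightarrow{-b}q$ and $b$ is appended to its output channel: $\alpha$ for $F_0$, $\beta$ for $F_1$) or a receive (a machine performs $p\xrightarrow{+b}q$ and $b$ is removed from the front of its input channel, $\beta$ for $F_0$, $\alpha$ for $F_1$, which must begin with $b$); the other machine is unchanged. Reachable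 means reachable from the initial global state. A global state is deadlocked if both components are receive states and both channels are empty; the protocol is deadlock-free if no deadlocked global state is reachable. It has the bounded channel property if $|x_\alpha|+|x_\beta|$ is bounded over all reachable global states. $\pi_\alpha(w)$ (resp. $\pi_\beta(w)$) is the string of symbols of $M_\alpha$ (resp. $M_\beta$) occurring in $w$, in order, signs removed; $\mathbf Z_j=\{(\pi_\alpha(w),\pi_\beta(w)): h_j\xrightarrow{w}h_j \text{ in } F_j\}$; the pair is affine if $\mathbf Z_0=\mathbf Z_1$. A send cycle of $F_j$ is a directed cycle in its transition diagram all of whose labels are of the form $-b$. *)

From mathcomp Require Import all_boot.
Set Implicit Arguments. Unset Strict Implicit. Unset Printing Implicit Defensive.

(* A machine with own-output alphabet S and input alphabet R
   has events of type S + R:  inl s  is the send event  -s,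
                              inr r  is the receive event +r.
   F_0 : events Ma + Mb (sends on alpha, receives on beta);
   F_1 : events Mb + Ma (sends on beta, receives on alpha).
   Disjointness of Ma and Mb is built in (they are distinct types / the
   channel of each message is determined by its type). *)

Section Machine.
Variables (S R K : finType) (T : K -> S + R -> K -> bool).

Fixpoint walk (p : K) (w : seq (S + R)) (q : K) : Prop :=
  match w with
  | [::] => p = q
  | e :: w' => exists r, T p e r /\ walk r w' q
  end.

Definition send_state (p : K) : Prop := forall (r : R) (q : K), ~~ T p (inr r) q.
Definition receive_state (p : K) : Prop := forall (s : S) (q : K), ~~ T p (inl s) q.

Definition SR_machine : Prop :=
  [/\ (forall p, send_state p \/ receive_state p),
      (forall p q, exists w, walk p w q) &
      (forall p e q1 q2, T p e q1 -> T p e q2 -> q1 = q2)].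

Definition sends (w : seq (S + R)) : seq S :=
  pmap (fun e => if e is inl s then Some s else None) w.
Definition recvs (w : seq (S + R)) : seq R :=
  pmap (fun e => if e is inr r then Some r else None) w.

Definition has_send_cycle : Prop :=
  exists (p : K) (w : seq (S + R)),
    w != [::] /\ walk p w p /\ all (fun e => if e is inl _ then true else false) w.
End Machine.

Section Protocol.
Variables (Ma Mb K0 K1 : finType) (h0 : K0) (h1 : K1)
          (T0 : K0 -> Ma + Mb -> K0 -> bool) (T1 : K1 -> Mb + Ma -> K1 -> bool).

(* Z_0 = Z_1, with Z_j the set of pairs (pi_alpha w, pi_beta w) for h_j --w--> h_j *)
Definition affine : Prop :=
  forall (xa : seq Ma) (xb : seq Mb),
    (exists w, walk T0 h0 w h0 /\ sends w = xa /\ recvs w = xb) <->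
    (exists w, walk T1 h1 w h1 /\ recvs w = xa /\ sends w = xb).

(* global state: ((p0, p1), (x_alpha, x_beta)) *)
Definition gstate := ((K0 * K1) * (seq Ma * seq Mb))%type.

Inductive step : gstate -> gstate -> Prop :=
| step_send0 p0 q0 p1 xa xb a :
    T0 p0 (inl a) q0 -> step ((p0, p1), (xa, xb)) ((q0, p1), (rcons xa a, xb))
| step_recv0 p0 q0 p1 xa xb b :
    T0 p0 (inr b) q0 -> step ((p0, p1), (xa, b :: xb)) ((q0, p1), (xa, xb))
| step_send1 p0 p1 q1 xa xb b :
    T1 p1 (inl b) q1 -> step ((p0, p1), (xa, xb)) ((p0, q1), (xa, rcons xb b))
| step_recv1 p0 p1 q1 xa xb a :
    T1 p1 (inr a) q1 -> step ((p0, p1), (a :: xa, xb)) ((p0, q1), (xa, xb)).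

Definition init_gstate : gstate := ((h0, h1), ([::], [::])).

Inductive reachable : gstate -> Prop :=
| reach_init : reachable init_gstate
| reach_step g g' : reachable g -> step g g' -> reachable g'.

Definition deadlocked (g : gstate) : Prop :=
  [/\ receive_state T0 g.1.1, receive_state T1 g.1.2, g.2.1 = [::] & g.2.2 = [::]].

Definition deadlock_free : Prop := forall g, reachable g -> ~ deadlocked g.

Definition bounded_channel : Prop :=
  exists N : nat, forall g, reachable g -> size g.2.1 + size g.2.2 <= N.
End Protocol.

From mathcomp Require Import all_boot zify.
Set Implicit Arguments. Unset Strict Implicit. Unset Printing Implicit Defensive.

(* Exchanging F_0 and F_1 preserves all hypotheses, so it suffices to consider a
   send cycle of F_0 and the channel alpha.

   If F_0 has a send cycle, close a walk of F_0 through it into a closed walk at h_0.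
   By affinity F_1 has a closed walk at h_1 receiving exactly what it sends and
   sending exactly what it receives, and deadlock-freedom lets the two walks be run
   together from the initial state; so F_0 reaches the cycle in some reachable
   state and can then fill alpha without bound.

   Conversely, without send cycles a walk with r receptions has fewer than
   |K|(r + 1) sends; via affinity this also excludes receive cycles, so a walk
   with s sends has fewer than |K|(s + 1) receptions.  In a reachable state with
   histories u of F_0 and v of F_1, complete v by a short walk back to h_1 and
   mirror the result into a closed walk U of F_0.  Both u and U start by sending
   what F_1 received along v, and the receptions of u are a prefix of those of U.
   As F_0 is deterministic, u and U agree until u stops receiving or the two send
   different messages, and in either case the excess of u, i.e. the content of
   alpha, is bounded in terms of the length of the short completion walk. *)

Lemma size_prefix_diverge (T : eqType) (A c s s' : seq T) a a' :
  a != a' -> prefix A (c ++ a :: s) -> prefix A (c ++ a' :: s') -> size A <= size c.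
Proof.
move=> neq_aa'; elim: c A => [|x c IHc] [|y A] //=.
  by move=> /andP[/eqP-> _] /andP[/eqP eq_aa' _]; rewrite eq_aa' eqxx in neq_aa'.
by move=> /andP[_ pA] /andP[_ pA']; rewrite ltnS; apply: IHc.
Qed.

Section Words.
Variables S R : finType.
Implicit Types (w : seq (S + R)) (e : S + R).

Definition is_send e : bool := if e is inl _ then true else false.
Definition is_recv e : bool := if e is inr _ then true else false.

Lemma sends_cat w1 w2 : sends (w1 ++ w2) = sends w1 ++ sends w2.
Proof. exact: pmap_cat. Qed.

Lemma recvs_cat w1 w2 : recvs (w1 ++ w2) = recvs w1 ++ recvs w2.
Proof. exact: pmap_cat. Qed.

Lemma size_sends w : size (sends w) = count is_send w.
Proof. by elim: w => // -[s|r] w /= ->. Qed.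

Lemma size_recvs w : size (recvs w) = count is_recv w.
Proof. by elim: w => // -[s|r] w /= ->. Qed.

Lemma predC_is_send : predC is_send =1 is_recv. Proof. by case. Qed.
Lemma predC_is_recv : predC is_recv =1 is_send. Proof. by case. Qed.

Lemma size_sends_all_send w : all is_send w -> size (sends w) = size w.
Proof. by rewrite all_count size_sends => /eqP. Qed.

Lemma sends_all_recv w : all is_recv w -> sends w = [::].
Proof. by elim: w => // -[s|r] w IHw //= /IHw. Qed.

End Words.
Arguments is_send {S R}.
Arguments is_recv {S R}.

Section Walks.
Variables (S R K : finType) (T : K -> S + R -> K -> bool).
Implicit Types (w : seq (S + R)) (p q : K).

Lemma walk_cat p w1 w2 q :
  walk T p (w1 ++ w2) q <-> exists r, walk T p w1 r /\ walk T r w2 q.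
Proof.
elim: w1 p => [|e w1 IHw] p /=; first by split; [exists p | case=> r [->]].
split=> [[r [Tr /IHw [m [W1 W2]]]] | [m [[r [Tr W1]] W2]]].
  by exists m; split => //; exists r.
by exists r; split => //; apply/IHw; exists m.
Qed.

Lemma walk_rcons p w e r q : walk T p w r -> T r e q -> walk T p (rcons w e) q.
Proof.
by move=> W Te; rewrite -cats1; apply/walk_cat; exists r; split => //; exists q.
Qed.

Lemma walk_det p w q q' :
  (forall p e q1 q2, T p e q1 -> T p e q2 -> q1 = q2) ->
  walk T p w q -> walk T p w q' -> q = q'.
Proof.
move=> det; elim: w p => [|e w IHw] p /=; first by move=> <-.
case=> r [Tr W] [r' [Tr' W']].
by move: W; rewrite (det _ _ _ _ Tr Tr') => W; apply: IHw W W'.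
Qed.

Lemma SR_send_state p s q : SR_machine T -> T p (inl s) q -> send_state T p.
Proof. by case=> kind _ _ Tp; case: (kind p) => // /(_ s q); rewrite Tp. Qed.

Lemma SR_receive_state p r q : SR_machine T -> T p (inr r) q -> receive_state T p.
Proof. by case=> kind _ _ Tp; case: (kind p) => // /(_ r q); rewrite Tp. Qed.

Lemma bounded_walks_to h : (forall p, exists w, walk T p w h) ->
  exists N, forall p, exists w, walk T p w h /\ size w <= N.
Proof.
move=> to_h.
suff [N HN] : exists N, forall p, p \in enum K -> exists w, walk T p w h /\ size w <= N.
  by exists N => p; apply: HN; rewrite mem_enum.
elim: (enum K) => [|x s [N HN]]; first by exists 0.
have [w Ww] := to_h x; exists (maxn N (size w)) => p.
rewrite in_cons => /predU1P [-> | /HN [w' [W' le_w'N]]].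
  by exists w; rewrite leq_maxr.
by exists w'; split => //; apply: leq_trans le_w'N (leq_maxl _ _).
Qed.

Lemma closed_walk_pump p c k : walk T p c p ->
  exists w, [/\ walk T p w p, size (sends w) = k * size (sends c)
                & size (recvs w) = k * size (recvs c)].
Proof.
move=> Wc; elim: k => [|k [w [Ww sw rw]]]; first by exists [::].
exists (w ++ c); split; first by apply/walk_cat; exists p.
  by rewrite sends_cat size_cat sw mulSn addnC.
by rewrite recvs_cat size_cat rw mulSn addnC.
Qed.

Definition has_cycle_in (P : pred (S + R)) : Prop :=
  exists p w, w != [::] /\ walk T p w p /\ all P w.

Definition has_recv_cycle : Prop := has_cycle_in is_recv.

Lemma count_lt_of_acyclic P p w q : ~ has_cycle_in P ->
  walk T p w q -> count P w < #|K| * (count (predC P) w).+1.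
Proof.
move=> acyclic.
(* Invariant: every state of V reaches the current state by P-events only.
   V grows along a run of P-events, so such a run has fewer than #|K| events. *)
suff run_inv : forall w p (V : {set K}), walk T p w q -> p \in V ->
    (forall v, v \in V -> exists w', walk T v w' p /\ all P w') ->
    count P w + #|V| <= #|K| * (count (predC P) w).+1.
  move=> Ww; have := run_inv w p [set p] Ww (set11 p).
  rewrite cards1 addn1; apply=> v /set1P ->; by exists [::].
elim=> [|e {}w IHw] {}p V /=.
  by move=> _ _ _; rewrite muln1 max_card.
case=> r [Te Ww] pV toP; case: (boolP (P e)) => Pe /=.
  have rV : r \notin V.
    apply/negP => /toP [w' [W' Pw']]; apply: acyclic.
    exists r, (rcons w' e); split; first by case: (w').
    by split; [apply: walk_rcons W' Te | rewrite all_rcons Pe].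
  have := IHw r (r |: V) Ww (setU11 r V).
  rewrite cardsU1 rV add1n addSn addnS => -> // v /setU1P [-> | /toP [w' [W' Pw']]].
    by exists [::].
  by exists (rcons w' e); rewrite all_rcons Pe Pw'; split => //; apply: walk_rcons W' Te.
have inv_r : forall v, v \in [set r] -> exists w', walk T v w' r /\ all P w'.
  by move=> v /set1P ->; exists [::].
have := IHw r [set r] Ww (set11 r) inv_r.
have := max_card V; rewrite cards1.
set cP := count P w; set cN := count _ w; set k := #|K|; set n := #|V|; nia.
Qed.

Lemma size_sends_lt p w q : ~ has_send_cycle T ->
  walk T p w q -> size (sends w) < #|K| * (size (recvs w)).+1.
Proof.
rewrite size_sends size_recvs -(eq_count (@predC_is_send _ _)).
exact: count_lt_of_acyclic.
Qed.

Lemma size_recvs_lt p w q : ~ has_recv_cycle ->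
  walk T p w q -> size (recvs w) < #|K| * (size (sends w)).+1.
Proof.
rewrite size_sends size_recvs -(eq_count (@predC_is_recv _ _)).
exact: count_lt_of_acyclic.
Qed.

Section SRMachine.
Hypothesis srT : SR_machine T.

Lemma walk_diverge p u U q q' :
  walk T p u q -> walk T p U q' -> prefix (recvs u) (recvs U) ->
  exists c u' U', [/\ u = c ++ u', U = c ++ U' &
    recvs u' = [::] \/ exists a a' u'' U'',
      [/\ u' = inl a :: u'', U' = inl a' :: U'', a != a'
        & prefix (recvs u'') (recvs U'')]].
Proof.
have [_ _ det] := srT.
elim: u p U => [|e u IHu] p U Wu WU pre; first by exists [::], [::], U; split => //; left.
case: U WU pre => [|e' U] WU pre.
  exists [::], (e :: u), [::]; split => //; left.
  by apply/eqP; rewrite -prefixs0.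
case: Wu => r [Te Wu]; case: WU => r' [Te' WU].
have [eq_ee' | neq_ee'] := eqVneq e e'.
  subst e'.
  move: WU; rewrite -(det _ _ _ _ Te Te') => WU.
  have pre' : prefix (recvs u) (recvs U).
    by move: pre; case: (e) => //= b /andP[].
  have [c [u' [U' [-> -> tail]]]] := IHu r U Wu WU pre'.
  by exists (e :: c), u', U'.
move: pre neq_ee'.
case: e Te => [a|b] Te; case: e' Te' => [a'|b'] Te' /=.
- move=> pre neq_aa'; exists [::], (inl a :: u), (inl a' :: U); split => //.
  by right; exists a, a', u, U.
- by have /(_ b' r') := SR_send_state srT Te; rewrite Te'.
- by have /(_ a' r') := SR_receive_state srT Te; rewrite Te'.
- by case/andP => /eqP-> _; rewrite eqxx.
Qed.

Hypotheses (no_send_cycle : ~ has_send_cycle T) (no_recv_cycle : ~ has_recv_cycle).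

Lemma sends_excess_le p u U q q' A x y :
  walk T p u q -> walk T p U q' -> prefix (recvs u) (recvs U) ->
  sends u = A ++ x -> sends U = A ++ y ->
  size x <= (1 + #|K| + #|K| * #|K|) * (size y).+1.
Proof.
move=> Wu WU pre su sU.
have [c [u' [U' [eu eU tail]]]] := walk_diverge Wu WU pre.
move: Wu WU su sU; rewrite {}eu {}eU => /walk_cat [r [_ Wu']] /walk_cat [r' [_ WU']].
rewrite !sends_cat; case: tail => [no_recv | [a [a' [u'' [U'' [eu' eU' neq_aa' pre']]]]]].
  have := size_sends_lt no_send_cycle Wu'; rewrite no_recv muln1.
  move=> B /(congr1 size) su /(congr1 size) sU; move: su sU; rewrite !size_cat.
  set k := #|K|; nia.
move: Wu' WU'; rewrite {}eu' {}eU' => -[r1 [_ Wu'']] [r1' [_ WU'']].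
rewrite /= => su sU.
have le_A : size A <= size (sends c).
  apply: (@size_prefix_diverge _ _ _ (sends u'') (sends U'') _ _ neq_aa').
    by rewrite su prefix_prefix.
  by rewrite sU prefix_prefix.
have B1 := size_sends_lt no_send_cycle Wu''.
have B2 := leq_ltn_trans (size_prefix pre') (size_recvs_lt no_recv_cycle WU'').
have {B1 B2} B : size (sends u'') < #|K| * (#|K| * (size (sends U'')).+1).
  by apply: leq_trans B1 _; rewrite leq_mul2l B2 orbT.
move: su sU => /(congr1 size) su /(congr1 size) sU; move: su sU; rewrite !size_cat /=.
set k := #|K| in B *; nia.
Qed.

End SRMachine.
End Walks.

Section Mirror.
Variables (S R K K' : finType) (T : K -> S + R -> K -> bool) (h : K)
          (T' : K' -> R + S -> K' -> bool) (h' : K').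

Definition mirrors : Prop := forall w, walk T h w h ->
  exists w', [/\ walk T' h' w' h', sends w' = recvs w & recvs w' = sends w].

Lemma no_recv_cycle_of_mirror : (forall p q, exists w, walk T p w q) ->
  mirrors -> ~ has_send_cycle T' -> ~ has_recv_cycle T.
Proof.
move=> conn mir no_send_cycle' [p [c [c_nil [Wc c_recv]]]].
have [s Ws] := conn h p; have [t Wt] := conn p h.
pose L := size (sends s) + size (sends t).
have [w [Ww sw rw]] := closed_walk_pump (#|K'| * L.+1) Wc.
have Wswt : walk T h (s ++ w ++ t) h.
  by apply/walk_cat; exists p; split => //; apply/walk_cat; exists p.
have [w' [Ww' sw' rw']] := mir _ Wswt.
have c_pos : 0 < size (recvs c).
  by move: c_recv; rewrite all_count size_recvs => /eqP ->; case: (c) c_nil.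
have := size_sends_lt no_send_cycle' Ww'.
rewrite sw' rw' !recvs_cat !sends_cat !size_cat rw sw (sends_all_recv c_recv) /= -/L.
set k := #|K'|; nia.
Qed.

End Mirror.

Section Swap.
Variables (Ma Mb K0 K1 : finType) (h0 : K0) (h1 : K1)
          (T0 : K0 -> Ma + Mb -> K0 -> bool) (T1 : K1 -> Mb + Ma -> K1 -> bool).

Definition swap_gstate (g : gstate Ma Mb K0 K1) : gstate Mb Ma K1 K0 :=
  ((g.1.2, g.1.1), (g.2.2, g.2.1)).

Lemma reachable_swap g :
  reachable h0 h1 T0 T1 g -> reachable h1 h0 T1 T0 (swap_gstate g).
Proof.
elim=> [|g1 g2 _ IH st]; first exact: reach_init.
apply: reach_step IH _; case: st => * /=.
- exact: step_send1.
- exact: step_recv1.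
- exact: step_send0.
- exact: step_recv0.
Qed.

End Swap.

Section Protocol.
Variables (Ma Mb K0 K1 : finType) (h0 : K0) (h1 : K1)
          (T0 : K0 -> Ma + Mb -> K0 -> bool) (T1 : K1 -> Mb + Ma -> K1 -> bool).
Local Notation reach := (reachable h0 h1 T0 T1).

Lemma reachable_unswap g : reachable h1 h0 T1 T0 g -> reach (swap_gstate g).
Proof. exact: reachable_swap. Qed.

Lemma deadlock_free_swap :
  deadlock_free h0 h1 T0 T1 -> deadlock_free h1 h0 T1 T0.
Proof.
move=> df [[p1 p0] [xb xa]] /reachable_unswap Rg [/= r1 r0 eb ea].
by apply: (df _ Rg); split.
Qed.

Lemma bounded_channel_swap :
  bounded_channel h0 h1 T0 T1 -> bounded_channel h1 h0 T1 T0.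
Proof.
by case=> N bd; exists N => -[[p1 p0] [xb xa]] /reachable_unswap /bd /=; rewrite addnC.
Qed.

Lemma affine_mirrors01 : affine h0 h1 T0 T1 -> mirrors T0 h0 T1 h1.
Proof.
move=> aff w Ww.
have [|w' [Ww' [rw' sw']]] := (aff (sends w) (recvs w)).1; first by exists w.
by exists w'.
Qed.

Lemma affine_mirrors10 : affine h0 h1 T0 T1 -> mirrors T1 h1 T0 h0.
Proof.
move=> aff w Ww.
have [|w' [Ww' [sw' rw']]] := (aff (recvs w) (sends w)).2; first by exists w.
by exists w'.
Qed.

Lemma reachable_history g : reach g -> exists u v,
  [/\ walk T0 h0 u g.1.1, walk T1 h1 v g.1.2,
      sends u = recvs v ++ g.2.1 & sends v = recvs u ++ g.2.2].
Proof.
elim=> [|g1 g2 _ [u [v [Wu Wv su sv]]] st]; first by exists [::], [::].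
case: st Wu Wv su sv => /= p0 q0 p1 xa xb m Tm Wu Wv su sv;
  [exists (rcons u (inl m)), v | exists (rcons u (inr m)), v
  | exists u, (rcons v (inl m)) | exists u, (rcons v (inr m))];
  split => //; try exact: walk_rcons Wu Tm; try exact: walk_rcons Wv Tm;
  by rewrite -?cats1 ?sends_cat ?recvs_cat /= ?cats0 ?su ?sv -?catA.
Qed.

Lemma reachable_send_walk0 p0 p1 xa xb w q :
  reach ((p0, p1), (xa, xb)) -> walk T0 p0 w q -> all is_send w ->
  reach ((q, p1), (xa ++ sends w, xb)).
Proof.
elim: w p0 xa => [|[a|//] w IHw] p0 xa Rg; first by move=> /= <-; rewrite cats0.
case=> r [Ta Ww] /= w_send; rewrite -cat_rcons.
exact: IHw (reach_step Rg (step_send0 _ _ _ _ Ta)) Ww w_send.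
Qed.

(* The remaining walks u and v exchange exactly the messages in transit in g
   followed by those they send themselves. *)
Definition pending (g : gstate Ma Mb K0 K1) u v : Prop :=
  [/\ reach g, exists q0, walk T0 g.1.1 u q0, exists q1, walk T1 g.1.2 v q1,
      g.2.1 ++ sends u = recvs v & g.2.2 ++ sends v = recvs u].

Lemma pending_send0 p0 p1 xa xb a u v :
  pending ((p0, p1), (xa, xb)) (inl a :: u) v ->
  exists r, T0 p0 (inl a) r /\ pending ((r, p1), (rcons xa a, xb)) u v.
Proof.
case=> Rg [q0 [r [Ta Wu]]] Wv /= I1 I2; exists r; split => //.
split => //=; first exact: reach_step Rg (step_send0 _ _ _ _ Ta).
  by exists q0.
by rewrite cat_rcons.
Qed.

Lemma pending_recv0 p0 p1 xa xb b u v :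
  pending ((p0, p1), (xa, b :: xb)) (inr b :: u) v ->
  exists r, T0 p0 (inr b) r /\ pending ((r, p1), (xa, xb)) u v.
Proof.
case=> Rg [q0 [r [Tb Wu]]] Wv /= I1 [I2]; exists r; split => //.
split => //=; [exact: reach_step Rg (step_recv0 _ _ _ _ Tb) | by exists q0].
Qed.

Lemma pending_send1 p0 p1 xa xb b u v :
  pending ((p0, p1), (xa, xb)) u (inl b :: v) ->
  exists r, pending ((p0, r), (xa, rcons xb b)) u v.
Proof.
case=> Rg Wu [q1 [r [Tb Wv]]] /= I1 I2; exists r.
split => //=; first exact: reach_step Rg (step_send1 _ _ _ _ Tb).
  by exists q1.
by rewrite cat_rcons.
Qed.

Lemma pending_recv1 p0 p1 xa xb a u v :
  pending ((p0, p1), (a :: xa, xb)) u (inr a :: v) ->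
  exists r, pending ((p0, r), (xa, xb)) u v.
Proof.
case=> Rg Wu [q1 [r [Ta Wv]]] /= [I1] I2; exists r.
split => //=; [exact: reach_step Rg (step_recv1 _ _ _ _ Ta) | by exists q1].
Qed.

Lemma pending_prefix g u v u1 u2 :
  SR_machine T0 -> SR_machine T1 -> deadlock_free h0 h1 T0 T1 ->
  pending g u v -> u = u1 ++ u2 -> exists g', reach g' /\ walk T0 g.1.1 u1 g'.1.1.
Proof.
move=> sr0 sr1 df.
have [n] := ubnP (size u + size v); elim: n => // n IH in g u v u1 *.
move: g => [[p0 p1] [xa xb]] /= lt_n pend.
case: u1 => [|e u1] eu; first by exists ((p0, p1), (xa, xb)); case: pend.
subst u.
have F0_moves g' : pending g' (u1 ++ u2) v -> T0 p0 e g'.1.1 ->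
    exists g'', reach g'' /\ walk T0 p0 (e :: u1) g''.1.1.
  move=> pend' Te; have [|g'' [Rg'' W]] := IH g' _ _ u1 _ pend' erefl.
    by move: lt_n => /=; lia.
  by exists g''; split => //; exists g'.1.1.
have F1_moves g' v' : pending g' (e :: u1 ++ u2) v' -> g'.1.1 = p0 ->
    size v' < size v -> exists g'', reach g'' /\ walk T0 p0 (e :: u1) g''.1.1.
  move=> pend' <- lt_v; apply: IH _ _ _ (e :: u1) _ pend' erefl.
  by move: lt_n => /=; lia.
clear lt_n IH; case: e => [a|b] in F0_moves F1_moves pend *.
  by have [r [Ta pend']] := pending_send0 pend; exact: F0_moves _ pend' Ta.
case: xb pend => [|b0 xb] pend; last first.
  have [_ _ _ _ /= [eb _]] := pend; subst b0.
  by have [r [Tb pend']] := pending_recv0 pend; exact: F0_moves _ pend' Tb.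
clear F0_moves; case: v => [|[b'|a] v] in pend F1_moves *.
- by case: pend.
- by have [r pend'] := pending_send1 pend; apply: F1_moves pend' _ _.
case: xa pend => [|a0 xa] pend; last first.
  have [_ _ _ /= [ea _] _] := pend; subst a0.
  by have [r pend'] := pending_recv1 pend; apply: F1_moves pend' _ _.
have [Rg [q0 [r0 [Tb _]]] [q1 [r1 [Ta _]]] _ _] := pend.
case: (df _ Rg); split => //.
  exact: SR_receive_state sr0 Tb.
exact: SR_receive_state sr1 Ta.
Qed.

Lemma send_cycle0_unbounded :
  SR_machine T0 -> SR_machine T1 -> mirrors T0 h0 T1 h1 ->
  deadlock_free h0 h1 T0 T1 -> has_send_cycle T0 -> ~ bounded_channel h0 h1 T0 T1.
Proof.
move=> sr0 sr1 mir df [p [c [c_nil [Wc c_send]]]] [N bounded].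
have [_ conn det] := sr0.
have [s Ws] := conn h0 p; have [t Wt] := conn p h0.
have [|W [WW sW rW]] := mir (s ++ t); first by apply/walk_cat; exists p.
have pend : pending (init_gstate Ma Mb h0 h1) (s ++ t) W.
  split; [exact: reach_init | | by exists h1 | by rewrite rW | by rewrite sW].
  by exists h0; apply/walk_cat; exists p.
have [g [Rg Wg]] := pending_prefix sr0 sr1 df pend erefl.
have gp : g.1.1 = p := walk_det det Wg Ws.
have pump k : exists g, [/\ reach g, g.1.1 = p & k <= size g.2.1].
  elim: k => [|k [[[p0 p1] [xa xb]] [Rg' /= ep0 le_k]]]; first by exists g.
  subst p0.
  exists ((p, p1), (xa ++ sends c, xb)); split => //=.
    exact: reachable_send_walk0 Rg' Wc c_send.
  have c_pos : 0 < size c by case: (c) c_nil.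
  by rewrite size_cat size_sends_all_send //; lia.
have [g' [Rg' _ lt_N]] := pump N.+1.
by have := bounded g' Rg'; lia.
Qed.

Lemma alpha_channel_bounded :
  SR_machine T0 -> SR_machine T1 -> mirrors T0 h0 T1 h1 -> mirrors T1 h1 T0 h0 ->
  ~ has_send_cycle T0 -> ~ has_send_cycle T1 ->
  exists N, forall g, reach g -> size g.2.1 <= N.
Proof.
move=> sr0 sr1 mir01 mir10 no_send_cycle0 no_send_cycle1.
have [_ conn0 _] := sr0; have [_ conn1 _] := sr1.
have no_recv_cycle0 := no_recv_cycle_of_mirror conn0 mir01 no_send_cycle1.
have [N1 to_h1] := bounded_walks_to (fun p => conn1 p h1).
exists ((1 + #|K0| + #|K0| * #|K0|) * N1.+1).
move=> g /reachable_history [u [v [Wu Wv su sv]]].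
have [s [Ws le_s]] := to_h1 g.1.2.
have [|U [WU sU rU]] := mir10 (v ++ s); first by apply/walk_cat; exists g.1.2.
have pre : prefix (recvs u) (recvs U) by rewrite rU sends_cat sv -catA prefix_prefix.
have sU' : sends U = recvs v ++ recvs s by rewrite sU recvs_cat.
apply: leq_trans (sends_excess_le sr0 no_send_cycle0 no_recv_cycle0 Wu WU pre su sU') _.
by rewrite leq_mul2l ltnS (leq_trans _ le_s) ?orbT // size_recvs count_size.
Qed.

End Protocol.

Theorem theorem6p3 (Ma Mb K0 K1 : finType) (h0 : K0) (h1 : K1)
    (T0 : K0 -> Ma + Mb -> K0 -> bool) (T1 : K1 -> Mb + Ma -> K1 -> bool) :
  SR_machine T0 -> SR_machine T1 ->
  affine h0 h1 T0 T1 ->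
  deadlock_free h0 h1 T0 T1 ->
  (bounded_channel h0 h1 T0 T1 <-> (~ has_send_cycle T0 /\ ~ has_send_cycle T1)).
Proof.
move=> sr0 sr1 aff df.
have mir01 := affine_mirrors01 aff; have mir10 := affine_mirrors10 aff.
split=> [bd | [no_send_cycle0 no_send_cycle1]].
  split=> send_cycle.
    exact: send_cycle0_unbounded sr0 sr1 mir01 df send_cycle bd.
  exact: send_cycle0_unbounded sr1 sr0 mir10 (deadlock_free_swap df) send_cycle
    (bounded_channel_swap bd).
have [Na bd_alpha] :=
  alpha_channel_bounded sr0 sr1 mir01 mir10 no_send_cycle0 no_send_cycle1.
have [Nb bd_beta] :=
  alpha_channel_bounded sr1 sr0 mir10 mir01 no_send_cycle1 no_send_cycle0.
exists (Na + Nb) => g Rg.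
by apply: leq_add; [exact: bd_alpha | exact: bd_beta _ (reachable_swap Rg)].
Qed.
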